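(* Let $a,b,k$ be positive integers. If the player cannot win the $(a,b)$-game, then the player cannot win the $(a,bk)$-game.
   Context: The $(n,m)$-game: $n$ counters at positions $1,\dots,n$ (vertices in cyclic order of a regular $n$-gon table), each showing an element of $\mathbb{Z}_m$; a configuration is a vector in $\mathbb{Z}_m^n$, initially arbitrary and unknown. Each turn the player chooses a move $y\in\mathbb{Z}_m^n$ added coordinatewise, then the table is rotated by an adversarially chosen $k\in\mathbb{Z}_n$, replacing $x$ by $x'$ with $x'_{i+k}=x_i$ (indices mod $n$). The player wins if at some moment (including initially) all counters show $0$. A strategy is a finite sequence of moves; it is winning if it forces the zero configuration at some time for every initial configuration and every choice of rotations. ''The player can win'' means a winning finite sequence exists. *)

From mathcomp Require Import all_boot.
Set Implicit Arguments. Unset Strict Implicit. Unset Printing Implicit Defensive.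

(* Z_m is represented by 'I_m (m > 0 is implied by inhabitation) with
   addition modulo m; positions 1..n are represented by 'I_n (0-based),
   and Z_n acts on them by addition modulo n. *)

Lemma ord_pos (m : nat) (a : 'I_m) : 0 < m.
Proof. exact: leq_ltn_trans (leq0n a) (ltn_ord a). Qed.

Definition addZ (m : nat) (a b : 'I_m) : 'I_m :=
  Ordinal (ltn_pmod (a + b) (ord_pos a)).

Definition subZ (n : nat) (i k : 'I_n) : 'I_n :=
  Ordinal (ltn_pmod (i + (n - k)) (ord_pos i)).

Definition config (n m : nat) := 'I_n -> 'I_m.

Definition addc n m (x y : config n m) : config n m := fun i => addZ (x i) (y i).

(* rotation by k : x' with x'_{i+k} = x_i, i.e. x'_j = x_{j-k} *)
Definition rotc n m (k : 'I_n) (x : config n m) : config n m :=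
  fun j => x (subZ j k).

Definition is_zero n m (x : config n m) : Prop := forall i, val (x i) = 0.

(* [hits x s ks t]: starting from configuration x at turn t, playing the
   moves s in order, with the adversary rotating by ks t, ks (t+1), ...,
   the zero configuration occurs at some moment (including now). *)
Fixpoint hits n m (x : config n m) (s : seq (config n m)) (ks : nat -> 'I_n)
  (t : nat) : Prop :=
  is_zero x \/
  match s with
  | [::] => False
  | y :: s' => hits (rotc (ks t) (addc x y)) s' ks t.+1
  end.

Definition winning n m (s : seq (config n m)) : Prop :=
  forall (x : config n m) (ks : nat -> 'I_n), hits x s ks 0.

Definition can_win (n m : nat) : Prop := exists s : seq (config n m), winning s.

From mathcomp Require Import all_boot.

(* Reduction modulo [m] is a ring morphism Z_d -> Z_m whenever m divides d,
   and it commutes coordinatewise with adding moves and with rotations.  So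
   the image of a play of the (n, d)-game is a play of the (n, m)-game that
   reaches zero whenever the original one does; since every configuration of
   Z_m^n lifts to Z_d^n, a winning strategy for (n, d) reduces to one for
   (n, m). *)

Section Reduction.
Variables (m d : nat).
Hypotheses (m_gt0 : 0 < m) (m_dvd_d : m %| d).

Definition reduceZ (x : 'I_d) : 'I_m := Ordinal (ltn_pmod x m_gt0).

Definition reducec n (x : config n d) : config n m := fun i => reduceZ (x i).

Lemma reduceZ_add (x y : 'I_d) : reduceZ (addZ x y) = addZ (reduceZ x) (reduceZ y).
Proof. by apply: val_inj; rewrite /= modn_dvdm // modnDm. Qed.

(* Configurations are plain functions, so the image is specified pointwise
   rather than as [reducec x], avoiding functional extensionality. *)
Lemma hits_reducec n (s : seq (config n d)) (ks : nat -> 'I_n) :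
  forall t (x : config n d) (x' : config n m),
  (forall i, x' i = reduceZ (x i)) -> hits x s ks t -> hits x' (map (@reducec n) s) ks t.
Proof.
have reduce_zero (x : config n d) (x' : config n m) :
    (forall i, x' i = reduceZ (x i)) -> is_zero x -> is_zero x'.
  by move=> x'E x0 i; rewrite x'E /= x0 mod0n.
elim: s => [|y s IHs] t x x' x'E /=.
  by case=> // x0; left; exact: reduce_zero x0.
case=> [x0|hits_next]; first by left; exact: reduce_zero x0.
right; apply: IHs hits_next => i.
by rewrite /rotc /addc x'E reduceZ_add.
Qed.

Hypothesis d_gt0 : 0 < d.

Lemma liftZ_subproof (x : 'I_m) : x < d.
Proof. exact: leq_trans (ltn_ord x) (dvdn_leq d_gt0 m_dvd_d). Qed.

Definition liftZ (x : 'I_m) : 'I_d := Ordinal (liftZ_subproof x).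

Lemma liftZK : cancel liftZ reduceZ.
Proof. by move=> x; apply: val_inj; rewrite /= modn_small. Qed.

Lemma can_win_dvd n : can_win n d -> can_win n m.
Proof.
case=> s s_wins; exists (map (@reducec n) s) => x ks.
apply: (@hits_reducec n s ks 0 (fun i => liftZ (x i))) (s_wins _ ks) => i.
by rewrite liftZK.
Qed.

End Reduction.

Theorem lemma3p2 (a b k : nat) :
  0 < a -> 0 < b -> 0 < k -> ~ can_win a b -> ~ can_win a (b * k).
Proof.
move=> _ b_gt0 k_gt0 lose_b win_bk; apply: lose_b.
have bk_gt0 : 0 < b * k by rewrite muln_gt0 b_gt0.
exact: can_win_dvd b_gt0 (dvdn_mulr k (dvdnn b)) bk_gt0 _ win_bk.
Qed.
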